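(* For every stream type $s$, setting $N = B(s)$, for every list of events $xs$ with $xs \Vdash s$ and every event $x$ occurring in $xs$, we have $|x| \le N$.
   Context: Stream types are generated by $s,t ::= 1 \mid \varepsilon \mid s\cdot t \mid s\,\|\,t \mid s+t \mid s^\star$. Nullability: $\varepsilon$ is nullable; $s\|t$ is nullable if $s$ and $t$ are; nothing else is nullable. Events are generated by $x ::= \mathtt{oneev} \mid \mathtt{parA}(x) \mid \mathtt{parB}(x) \mid \mathtt{puncA} \mid \mathtt{puncB} \mid \mathtt{catpunc} \mid \mathtt{catA}(x)$. The event derivative relation $\delta_x s \sim s'$ (which also serves as event typing: $x$ is an event for $s$ iff $\delta_x s\sim s'$ for some $s'$) is defined inductively by: $\delta_{\mathtt{oneev}}1\sim\varepsilon$; $\delta_{\mathtt{parA}(x)}(s\|t)\sim s'\|t$ if $\delta_x s\sim s'$; $\delta_{\mathtt{parB}(x)}(s\|t)\sim s\|t'$ if $\delta_x t\sim t'$; $\delta_{\mathtt{puncA}}(s+t)\sim s$; $\delta_{\mathtt{puncB}}(s+t)\sim t$; $\delta_{\mathtt{catpunc}}(s\cdot t)\sim t$ if $s$ is nullable; $\delta_{\mathtt{catA}(x)}(s\cdot t)\sim s'\cdot t$ if $\delta_x s\sim s'$; $\delta_{\mathtt{puncA}}s^\star\sim\varepsilon$; $\delta_{\mathtt{puncB}}s^\star\sim s\cdot s^\star$. A list of events is for a type, $xs\Vdash s$: the empty list $[]\Vdash s$ for every $s$; and $(x::xs)\Vdash s$ if $x$ is an event for $s$, $\delta_x s\sim s'$,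 and $xs\Vdash s'$. Event size: $|\mathtt{oneev}|=|\mathtt{puncA}|=|\mathtt{puncB}|=|\mathtt{catpunc}|=1$, $|\mathtt{parA}(x)|=|\mathtt{parB}(x)|=|\mathtt{catA}(x)|=1+|x|$. Size bound: $B(\varepsilon)=0$, $B(1)=1$, $B(s\|t)=1+\max(B(s),B(t))$, $B(s\cdot t)=\max(1+B(s),B(t))$, $B(s+t)=\max(1,B(s),B(t))$, $B(s^\star)=\max(1,1+B(s))$. *)

From Stdlib Require Import List Arith.
Import ListNotations.

Inductive ty : Type :=
| TOne : ty
| TEps : ty
| TCat : ty -> ty -> ty
| TPar : ty -> ty -> ty
| TPlus : ty -> ty -> ty
| TStar : ty -> ty.

Inductive nullable : ty -> Prop :=
| NullEps : nullable TEps
| NullPar : forall s t, nullable s -> nullable t -> nullable (TPar s t).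

Inductive ev : Type :=
| OneEv : ev
| ParA : ev -> ev
| ParB : ev -> ev
| PuncA : ev
| PuncB : ev
| CatPunc : ev
| CatA : ev -> ev.

Inductive deriv : ev -> ty -> ty -> Prop :=
| DOne : deriv OneEv TOne TEps
| DParA : forall x s t s', deriv x s s' -> deriv (ParA x) (TPar s t) (TPar s' t)
| DParB : forall x s t t', deriv x t t' -> deriv (ParB x) (TPar s t) (TPar s t')
| DPlusA : forall s t, deriv PuncA (TPlus s t) s
| DPlusB : forall s t, deriv PuncB (TPlus s t) t
| DCatPunc : forall s t, nullable s -> deriv CatPunc (TCat s t) t
| DCatA : forall x s t s', deriv x s s' -> deriv (CatA x) (TCat s t) (TCat s' t)
| DStarA : forall s, deriv PuncA (TStar s) TEps
| DStarB : forall s, deriv PuncB (TStar s) (TCat s (TStar s)).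

Definition ev_for (x : ev) (s : ty) : Prop := exists s', deriv x s s'.

Inductive evs_for : list ev -> ty -> Prop :=
| EvsNil : forall s, evs_for [] s
| EvsCons : forall x xs s s', ev_for x s -> deriv x s s' -> evs_for xs s' ->
    evs_for (x :: xs) s.

Fixpoint ev_size (x : ev) : nat :=
  match x with
  | OneEv | PuncA | PuncB | CatPunc => 1
  | ParA y | ParB y | CatA y => 1 + ev_size y
  end.

Fixpoint size_bound (s : ty) : nat :=
  match s with
  | TEps => 0
  | TOne => 1
  | TPar s t => 1 + Nat.max (size_bound s) (size_bound t)
  | TCat s t => Nat.max (1 + size_bound s) (size_bound t)
  | TPlus s t => Nat.max 1 (Nat.max (size_bound s) (size_bound t))
  | TStar s => Nat.max 1 (1 + size_bound s)
  end.

(* The bound B(s) dominates the size of every event for s and never increases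
   along a derivative, so it dominates every event of a list for s. *)
From Stdlib Require Import List Arith Lia.

Lemma ev_size_le_size_bound (x : ev) (s s' : ty) :
  deriv x s s' -> ev_size x <= size_bound s.
Proof.
  induction 1; cbn -[Nat.max] in *; lia.
Qed.

Lemma size_bound_deriv (x : ev) (s s' : ty) :
  deriv x s s' -> size_bound s' <= size_bound s.
Proof.
  induction 1; cbn -[Nat.max] in *; lia.
Qed.

Lemma evs_for_ev_size_le (xs : list ev) (s : ty) :
  evs_for xs s -> forall x, In x xs -> ev_size x <= size_bound s.
Proof.
  induction 1 as [s | y ys s s' _ Hderiv _ IH]; intros x Hin.
  - destruct Hin.
  - destruct Hin as [<- | Hin].
    + exact (ev_size_le_size_bound _ _ _ Hderiv).
    + exact (Nat.le_trans _ _ _ (IH x Hin) (size_bound_deriv _ _ _ Hderiv)).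
Qed.

Theorem mainTheorem10 :
  forall (s : ty) (xs : list ev) (x : ev),
    let N := size_bound s in
    evs_for xs s -> In x xs -> ev_size x <= N.
Proof.
  intros s xs x N Hxs Hin.
  exact (evs_for_ev_size_le xs s Hxs x Hin).
Qed.
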